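(* Let $k$ be a field, $A$ a commutative $k$-algebra, $k_n=k[t]/(t^{n+1})$, and $B$ a $k_n$-algebra with an isomorphism $gr\,B\simeq A\otimes_kk_n$ such that $B$ induces a deformation of $D(A)$. Let $\tau:D(B)\to D(A)$ be the residue map and suppose there is a $k$-algebra homomorphism $s:D(A)\to D(B)$ with $\tau\circ s=\mathrm{id}$. Regard $B$ as a left $A\otimes_kk_n$-module via $a\cdot b=s(a)(b)$ for $a\in A\subset D(A)$ (and $t$ acting by multiplication). Then (i) the residue map $\beta:B\to B/tB=A$ is a homomorphism of left $A$-modules; (ii) $B$ is a free $A\otimes_kk_n$-module of rank $1$.
   Context: All differential operators are $k[t]$-linear. For a $k_n$-algebra $C$, $D(C)=\bigcup_mD^m(C)$ with $D^m(C)=\{d\in\operatorname{End}_{k_n}(C): [f_m,\dots,[f_0,d]\dots]=0\ \forall f_i\in C\}$ ($f$ acting by left multiplication, $[f,d]=fd-df$); $D(A)$ is the ring of $k$-linear differential operators on $A$, containing $A$ as left multiplications. $gr$ is taken for the $t$-adic filtration. The natural map $\gamma:gr\,D(B)\to\operatorname{End}_{k_n}(gr\,B)$ sends the class of $d\in t^iD(B)$ to the endomorphism $t^jB/t^{j+1}B\to t^{i+j}B/t^{i+j+1}B$ induced by $d$; it lands in $D(gr\,B)$. $B$ induces a deformation of $D(A)$ if $\gamma:gr\,D(B)\to D(gr\,B)$ is an isomorphism; then, as $D(gr\,B)\simeq D(A\otimes k_n)=D(A)\otimes k_n$, $D(B)$ is an $n$-th order deformation of $D(A)$, and $\tau$ is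 the composite $D(B)\to D(B)/tD(B)\simeq D(A)$ (each operator $d$ is sent to the operator it induces on $B/tB=A$). *)

From HB Require Import structures.
From mathcomp Require Import all_boot all_order all_algebra.

Set Implicit Arguments.
Unset Strict Implicit.
Unset Printing Implicit Defensive.

Import GRing.Theory.
Local Open Scope ring_scope.

Definition klinear (k : nzRingType) (V : lmodType k) (d : V -> V) : Prop :=
  forall (c : k) (x y : V), d (c *: x + y) = c *: d x + d y.

Definition comm_op (V : zmodType) (mul : V -> V -> V) (f : V) (d : V -> V)
  : V -> V := fun x => mul f (d x) - d (mul f x).

Fixpoint itcomm (V : zmodType) (mul : V -> V -> V) (fs : seq V) (d : V -> V)
  : V -> V :=
  match fs with
  | [::] => d
  | f :: fs' => comm_op mul f (itcomm mul fs' d)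
  end.

Definition diffop_of_order (V : zmodType) (mul : V -> V -> V) (m : nat)
  (d : V -> V) : Prop :=
  forall fs : seq V, size fs = m.+1 -> forall x, itcomm mul fs d x = 0.

Definition is_kdiffop (k : nzRingType) (V : lmodType k) (mul : V -> V -> V)
  (d : V -> V) : Prop :=
  klinear d /\ exists m, diffop_of_order mul m d.

(* d in D(C) for a k_n-algebra C, t being the image of the variable of k_n:
   k_n-linear (= k-linear and commuting with t) differential operators *)
Definition is_kndiffop (k : nzRingType) (V : lmodType k) (mul : V -> V -> V)
  (tt : V) (d : V -> V) : Prop :=
  is_kdiffop mul d /\ forall x, d (mul tt x) = mul tt (d x).

(* ---------- A (x)_k k_n  =  A[t]/(t^(n+1)), as coefficient vectors ---------- *)

Definition trunc (k : nzRingType) (A : comAlgType k) (n : nat) :=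
  {ffun 'I_n.+1 -> A}.

Definition trunc_mul (k : nzRingType) (A : comAlgType k) (n : nat)
  (x y : {ffun 'I_n.+1 -> A}) : {ffun 'I_n.+1 -> A} :=
  [ffun l : 'I_n.+1 =>
     \sum_(i < n.+1) \sum_(j < n.+1 | (i + j)%N == val l) x i * y j].

(* the variable t of k_n (equal to 0 when n = 0) *)
Definition trunc_t (k : nzRingType) (A : comAlgType k) (n : nat)
  : {ffun 'I_n.+1 -> A} :=
  [ffun l : 'I_n.+1 => if val l == 1%N then 1 else 0].

(* the homogeneous element a t^j (zero if j > n) *)
Definition trunc_mono (k : nzRingType) (A : comAlgType k) (n j : nat) (a : A)
  : {ffun 'I_n.+1 -> A} :=
  [ffun l : 'I_n.+1 => if val l == j then a else 0].

(* The degree-j component t^jB/t^{j+1}B of gr B is handled through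
   representatives in t^jB = { t^j * b }: theta j x is the image in A (= the
   coefficient of t^j in A (x) k_n) of the class of x in t^jB/t^{j+1}B.
   The conditions say: theta j is k-linear, well defined and injective on
   t^jB/t^{j+1}B (kernel exactly t^{j+1}B), surjective onto A, and the sum of
   the theta j is a graded k_n-algebra isomorphism (multiplicative, unital,
   commuting with t). *)
Definition gr_iso (k : nzRingType) (A B : comAlgType k) (n : nat) (t : B)
  (theta : nat -> B -> A) : Prop :=
  [/\ (forall j (c : k) (x y : B),
         theta j (c *: x + y) = c *: theta j x + theta j y),
      (forall j, (j <= n)%N -> forall b : B,
         theta j (t ^+ j * b) = 0 <-> exists b', t ^+ j * b = t ^+ j.+1 * b'),
      (forall j, (j <= n)%N -> forall a : A, exists b : B,
         theta j (t ^+ j * b) = a),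
      (forall i j, (i + j <= n)%N -> forall b c : B,
         theta (i + j)%N ((t ^+ i * b) * (t ^+ j * c))
         = theta i (t ^+ i * b) * theta j (t ^+ j * c)) &
      theta 0%N 1 = 1] /\
      (forall j, (j < n)%N -> forall b : B,
         theta j.+1 (t * (t ^+ j * b)) = theta j (t ^+ j * b)).

(* gamma_rel i e E : E (an endomorphism of A (x) k_n ~ gr B) is the image under
   gamma of the class of e in t^iD(B)/t^{i+1}D(B), i.e. E is k-linear and sends
   the class of x in t^jB/t^{j+1}B to the class of e x in
   t^{i+j}B/t^{i+j+1}B (transported through theta). *)
Definition gamma_rel (k : nzRingType) (A B : comAlgType k) (n : nat) (t : B)
  (theta : nat -> B -> A) (i : nat) (e : B -> B)
  (E : {ffun 'I_n.+1 -> A} -> {ffun 'I_n.+1 -> A}) : Prop :=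
  klinear E /\
  forall j, (j <= n)%N -> forall b : B,
    E (trunc_mono n j (theta j (t ^+ j * b)))
    = trunc_mono n (i + j) (theta (i + j)%N (e (t ^+ j * b))).

(* B induces a deformation of D(A): gamma : gr D(B) = (+)_i t^iD(B)/t^{i+1}D(B)
   -> D(gr B) is bijective.  An element of gr D(B) is given by a family
   (class of t^i d_i)_{i <= n} with d_i in D(B). *)
Definition induces_deformation (k : nzRingType) (A B : comAlgType k) (n : nat)
  (t : B) (theta : nat -> B -> A) : Prop :=
  (forall E : {ffun 'I_n.+1 -> A} -> {ffun 'I_n.+1 -> A},
     is_kndiffop (@trunc_mul k A n) (trunc_t A n) E ->
     exists (d : 'I_n.+1 -> B -> B)
            (Es : 'I_n.+1 -> {ffun 'I_n.+1 -> A} -> {ffun 'I_n.+1 -> A}),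
       [/\ forall i : 'I_n.+1, is_kndiffop *%R t (d i),
           forall i : 'I_n.+1, gamma_rel t theta i (fun x => t ^+ i * d i x) (Es i) &
           forall y, E y = \sum_(i < n.+1) Es i y]) /\
  (forall (d : 'I_n.+1 -> B -> B)
          (Es : 'I_n.+1 -> {ffun 'I_n.+1 -> A} -> {ffun 'I_n.+1 -> A}),
     (forall i : 'I_n.+1, is_kndiffop *%R t (d i)) ->
     (forall i : 'I_n.+1, gamma_rel t theta i (fun x => t ^+ i * d i x) (Es i)) ->
     (forall y, \sum_(i < n.+1) Es i y = 0) ->
     forall i : 'I_n.+1, exists d' : B -> B,
       is_kndiffop *%R t d' /\ forall x, t ^+ i * d i x = t ^+ i.+1 * d' x).

Definition DA_DB_alg_hom (k : nzRingType) (A B : comAlgType k) (t : B)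
  (s : (A -> A) -> (B -> B)) : Prop :=
  [/\ (forall P, is_kdiffop *%R P -> is_kndiffop *%R t (s P)),
      (forall P Q, is_kdiffop *%R P -> is_kdiffop *%R Q -> forall x,
         s (fun y => P y + Q y) x = s P x + s Q x),
      (forall (c : k) P, is_kdiffop *%R P -> forall x,
         s (fun y => c *: P y) x = c *: s P x),
      (forall P Q, is_kdiffop *%R P -> is_kdiffop *%R Q -> forall x,
         s (fun y => P (Q y)) x = s P (s Q x)) &
      (forall x, s (fun y => y) x = x)].

Definition tens_act (k : nzRingType) (A B : comAlgType k) (n : nat) (t : B)
  (s : (A -> A) -> (B -> B)) (x : {ffun 'I_n.+1 -> A}) (b : B) : B :=
  \sum_(j < n.+1) t ^+ j * s (fun y => x j * y) b.

From HB Require Import structures.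
From mathcomp Require Import all_boot all_order all_algebra.
From Stdlib Require Import FunctionalExtensionality.

Set Implicit Arguments.
Unset Strict Implicit.
Unset Printing Implicit Defensive.

Import GRing.Theory.
Local Open Scope ring_scope.

(* Take e = 1, so that x = sum_j a_j t^j acts by x.1 = sum_j t^j s(a_j)(1).
   Since tau o s = id, s(a)(1) is congruent to a modulo tB, and multiplication
   by t^j identifies B/tB = A with t^jB/t^(j+1)B; hence every element of t^jB
   agrees with some t^j s(a)(1) modulo t^(j+1)B.  Descending induction along the
   t-adic filtration, which stops because t^(n+1) = 0, gives surjectivity of
   x |-> x.1, and reading off the lowest nonzero coefficient of x gives
   injectivity.  Part (i) is tau o s = id applied to multiplication operators. *)

Lemma is_kdiffop_mul (k : nzRingType) (A : comAlgType k) (a : A) :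
  is_kdiffop *%R ( *%R a).
Proof.
split; first by move=> c x y; rewrite mulrDr scalerAr.
exists 0%N => -[|f [|? ?]] //= _ x.
by rewrite /comm_op mulrCA subrr.
Qed.

Lemma sum_texp_split (R : pzRingType) (t : R) (n m : nat) (c : 'I_n.+1 -> R)
    (lt_m_n : (m < n.+1)%N) :
  (forall j : 'I_n.+1, (j < m)%N -> c j = 0) ->
  \sum_(j < n.+1) t ^+ j * c j
  = t ^+ m * (c (Ordinal lt_m_n)
              + t * \sum_(j < n.+1 | (m < j)%N) t ^+ (j - m.+1) * c j).
Proof.
move=> c_low; rewrite mulrDr mulrA -exprSr mulr_sumr (bigD1 (Ordinal lt_m_n)) //=.
congr (_ + _); rewrite big_mkcond [RHS]big_mkcond /=; apply: eq_bigr => j _.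
case: (ltngtP m j) => [m_lt_j | j_lt_m | m_eq_j].
- by rewrite -val_eqE /= gtn_eqF // mulrA -exprD subnKC.
- by rewrite c_low // mulr0; case: ifP.
- by rewrite -val_eqE /= -m_eq_j eqxx.
Qed.

Section GradedIsomorphism.

Variables (k : nzRingType) (A B : comAlgType k) (n : nat) (t : B).
Variable theta : nat -> B -> A.
Hypothesis grB : gr_iso n t theta.

Lemma thetaD j : {morph theta j : x y / x + y}.
Proof.
have [[lin _ _ _ _] _] := grB; move=> x y.
by rewrite -[x in LHS]scale1r lin scale1r.
Qed.

Lemma thetaB j : {morph theta j : x y / x - y}.
Proof.
have [[lin _ _ _ _] _] := grB; move=> x y.
by rewrite addrC -scaleN1r lin scaleN1r addrC.
Qed.

Lemma theta0 j : theta j 0 = 0.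
Proof. by rewrite -(subrr (0 : B)) thetaB subrr. Qed.

Lemma theta_texp j b : (j <= n)%N -> theta j (t ^+ j * b) = theta 0 b.
Proof.
have [_ shift] := grB; elim: j => [|j IHj] le_j_n; first by rewrite mul1r.
by rewrite exprS -mulrA shift // IHj // ltnW.
Qed.

Lemma theta0_tmul b : theta 0 (t * b) = 0.
Proof.
have [[_ ker _ _ _] _] := grB.
by have := (ker 0%N (leq0n n) (t * b)).2; rewrite !mul1r; apply; exists b.
Qed.

Lemma theta0_eq0_texp j b :
  (j <= n)%N -> theta 0 b = 0 -> exists b', t ^+ j * b = t ^+ j.+1 * b'.
Proof.
have [[_ ker _ _ _] _] := grB; move=> le_j_n b0.
by apply: (ker j le_j_n b).1; rewrite theta_texp.
Qed.

End GradedIsomorphism.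

Section SplitResidue.

Variables (k : nzRingType) (A B : comAlgType k) (n : nat) (t : B).
Variables (theta : nat -> B -> A) (s : (A -> A) -> (B -> B)).
Hypotheses (t_nilp : t ^+ n.+1 = 0) (grB : gr_iso n t theta).
Hypothesis s_hom : DA_DB_alg_hom t s.
Hypothesis tau_s : forall P : A -> A, is_kdiffop *%R P -> forall b : B,
  theta 0 (s P b) = P (theta 0 b).

Lemma s_mulD a a' b : s ( *%R (a + a')) b = s ( *%R a) b + s ( *%R a') b.
Proof.
case: s_hom => _ s_add _ _ _; rewrite -s_add; try exact: is_kdiffop_mul.
by congr (s _ b); apply: functional_extensionality => y; rewrite mulrDl.
Qed.

Lemma s_mulB a a' b : s ( *%R (a - a')) b = s ( *%R a) b - s ( *%R a') b.
Proof. by rewrite -[a in RHS](subrK a' a) (s_mulD (a - a')) addrK. Qed.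

Lemma s_mul0 b : s ( *%R 0) b = 0.
Proof. by rewrite -(subrr (0 : A)) s_mulB subrr. Qed.

Lemma theta0_s_mul a b : theta 0 (s ( *%R a) b) = a * theta 0 b.
Proof. exact/tau_s/is_kdiffop_mul. Qed.

Lemma theta0_s_mul1 a : theta 0 (s ( *%R a) 1) = a.
Proof. by have [[_ _ _ _ theta1] _] := grB; rewrite theta0_s_mul theta1 mulr1. Qed.

Lemma tens_actD (x y : {ffun 'I_n.+1 -> A}) e :
  tens_act t s (x + y) e = tens_act t s x e + tens_act t s y e.
Proof.
rewrite /tens_act -big_split; apply: eq_bigr => j _.
by rewrite !ffunE s_mulD mulrDr.
Qed.

Lemma tens_actB (x y : {ffun 'I_n.+1 -> A}) e :
  tens_act t s (x - y) e = tens_act t s x e - tens_act t s y e.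
Proof.
rewrite /tens_act -sumrB; apply: eq_bigr => j _.
by rewrite !ffunE s_mulB mulrBr.
Qed.

Lemma tens_act0 e : tens_act t s (0 : {ffun 'I_n.+1 -> A}) e = 0.
Proof. by rewrite -(subrr (0 : {ffun 'I_n.+1 -> A})) tens_actB subrr. Qed.

Lemma tens_act_mono m a e : (m <= n)%N ->
  tens_act t s (trunc_mono n m a) e = t ^+ m * s ( *%R a) e.
Proof.
rewrite -ltnS => lt_m_n; rewrite /tens_act (bigD1 (Ordinal lt_m_n)) //=.
rewrite ffunE eqxx big1 ?addr0 // => j; rewrite -val_eqE /= => /negbTE j_neq_m.
by rewrite ffunE j_neq_m s_mul0 mulr0.
Qed.

Lemma tens_act_texp_step m b : (m <= n)%N -> exists b',
  t ^+ m * b = tens_act t s (trunc_mono n m (theta 0 b)) 1 + t ^+ m.+1 * b'.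
Proof.
move=> le_m_n; set a := theta 0 b.
have [b' eq_b'] : exists b', t ^+ m * (b - s ( *%R a) 1) = t ^+ m.+1 * b'.
  apply: (theta0_eq0_texp grB) => //.
  by rewrite (thetaB grB) theta0_s_mul1 subrr.
by exists b'; rewrite tens_act_mono // -eq_b' -mulrDr addrC subrK.
Qed.

Lemma tens_act1_onto_texp d b : (d <= n.+1)%N ->
  exists x : {ffun 'I_n.+1 -> A}, tens_act t s x 1 = t ^+ (n.+1 - d) * b.
Proof.
elim: d b => [|d IHd] b le_d_n.
  by exists 0; rewrite subn0 t_nilp mul0r tens_act0.
have le_m_n : (n.+1 - d.+1 <= n)%N by rewrite subSS leq_subr.
have [b' ->] := tens_act_texp_step b le_m_n.
have [x eq_x] := IHd b' (ltnW le_d_n).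
exists (trunc_mono n (n.+1 - d.+1) (theta 0 b) + x).
by rewrite tens_actD eq_x subSS subSn.
Qed.

Lemma tens_act1_lowest_coef (z : {ffun 'I_n.+1 -> A}) m (lt_m_n : (m < n.+1)%N) :
  (forall j : 'I_n.+1, (j < m)%N -> z j = 0) ->
  tens_act t s z 1 = 0 -> z (Ordinal lt_m_n) = 0.
Proof.
move=> z_low; rewrite /tens_act (sum_texp_split t lt_m_n); last first.
  by move=> j /z_low ->; rewrite s_mul0.
move=> /(congr1 (theta m)); rewrite (theta0 grB) (theta_texp grB) // (thetaD grB).
by rewrite (theta0_tmul grB) addr0 theta0_s_mul1.
Qed.

Lemma tens_act1_eq0 (z : {ffun 'I_n.+1 -> A}) : tens_act t s z 1 = 0 -> z = 0.
Proof.
move=> z1; suff z_low m : (m <= n.+1)%N -> forall j : 'I_n.+1, (j < m)%N -> z j = 0.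
  by apply/ffunP => j; rewrite ffunE (z_low n.+1).
elim: m => [|m IHm] // lt_m_n j; rewrite ltnS leq_eqVlt => /orP[/eqP j_eq_m | ].
  rewrite (_ : j = Ordinal lt_m_n); last exact: val_inj.
  by apply: tens_act1_lowest_coef z1; apply: IHm; apply: ltnW.
by apply: IHm; apply: ltnW.
Qed.

Lemma tens_act1_inj : injective (fun x : {ffun 'I_n.+1 -> A} => tens_act t s x 1).
Proof.
move=> x y /= eq_xy; apply/eqP; rewrite -subr_eq0; apply/eqP.
by apply: tens_act1_eq0; rewrite tens_actB eq_xy subrr.
Qed.

End SplitResidue.

Theorem lemma9p6 (k : fieldType) (A B : comAlgType k) (n : nat) (t : B)
  (theta : nat -> B -> A) (s : (A -> A) -> (B -> B)) :
  t ^+ n.+1 = 0 ->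
  gr_iso n t theta ->
  induces_deformation n t theta ->
  DA_DB_alg_hom t s ->
  (* tau o s = id : s P induces P on B/tB = A *)
  (forall P : A -> A, is_kdiffop *%R P -> forall b : B,
     theta 0%N (s P b) = P (theta 0%N b)) ->
  ((forall b1 b2 : B, theta 0%N (b1 + b2) = theta 0%N b1 + theta 0%N b2) /\
   (forall (a : A) (b : B), theta 0%N (s (fun y => a * y) b) = a * theta 0%N b))
  /\
  (exists e : B, forall b : B,
     exists! x : {ffun 'I_n.+1 -> A}, tens_act t s x e = b).
Proof.
move=> t_nilp grB _ s_hom tau_s.
split; first by split; [exact: (thetaD grB) | exact: (theta0_s_mul tau_s)].
exists 1 => b.
have [x eq_x] := tens_act1_onto_texp t_nilp grB s_hom tau_s b (leqnn n.+1).
rewrite subnn mul1r in eq_x.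
exists x; split=> // y eq_y.
by apply: (tens_act1_inj grB s_hom tau_s); rewrite /= eq_x eq_y.
Qed.
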